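(* Let $\mathbf X=(X_1,\dots,X_n)$ be a random vector whose components are mutually independent, each $X_i$ taking values in a finite set $V_i\subset\mathbb{R}$, and let $f:\mathbb{R}^n\to\mathbb{R}$ be arbitrary. Then for all $T\subset T'\subset[n]$ and every $j\in[n]\setminus T'$, $$\mathrm{EVar}(T\cup\{j\})-\mathrm{EVar}(T)\ \ge\ \mathrm{EVar}(T'\cup\{j\})-\mathrm{EVar}(T').$$
   Context: For $T=\{i_1<\dots<i_k\}\subseteq[n]$ write $\mathbf X_T=(X_{i_1},\dots,X_{i_k})$ and $\mathbf V_T=V_{i_1}\times\dots\times V_{i_k}$. Define $$\mathrm{EVar}(T)=\sum_{\mathbf v\in\mathbf V_T,\ \Pr[\mathbf X_T=\mathbf v]>0}\Pr[\mathbf X_T=\mathbf v]\cdot \mathrm{Var}\big(f(\mathbf X)\mid \mathbf X_T=\mathbf v\big),$$ with $\mathrm{EVar}(\emptyset)=\mathrm{Var}(f(\mathbf X))$. *)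

From HB Require Import structures.
From mathcomp Require Import all_boot all_order all_algebra.
Set Implicit Arguments. Unset Strict Implicit. Unset Printing Implicit Defensive.
Import Order.TTheory GRing.Theory Num.Theory.
Local Open Scope ring_scope.

Section Defs.
Variables (R : realFieldType) (Omega : finType) (P : Omega -> R).

Definition Prob (A : pred Omega) : R := \sum_(w | A w) P w.

Definition cexp (A : pred Omega) (g : Omega -> R) : R :=
  (\sum_(w | A w) P w * g w) / Prob A.

Definition cvar (A : pred Omega) (g : Omega -> R) : R :=
  cexp A (fun w => (g w - cexp A g) ^+ 2).

Variable n : nat.
Variable X : 'I_n -> Omega -> R.

Definition mutually_independent : Prop :=
  forall (S : {set 'I_n}) (v : 'I_n -> R),
    Prob (fun w => [forall i in S, X i w == v i]) =
    \prod_(i in S) Prob (fun w => X i w == v i).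

Definition Xvec (w : Omega) : n.-tuple R := [tuple X i w | i < n].

(* X_T(w), encoded as an n-tuple whose coordinates outside T are 0 *)
Definition XT (T : {set 'I_n}) (w : Omega) : n.-tuple R :=
  [tuple if i \in T then X i w else 0 | i < n].

Definition EVar (f : n.-tuple R -> R) (T : {set 'I_n}) : R :=
  \sum_(v <- undup [seq XT T w | w <- enum Omega]
          | 0 < Prob (fun w => XT T w == v))
     Prob (fun w => XT T w == v) *
     cvar (fun w => XT T w == v) (fun w => f (Xvec w)).

Definition Var (f : n.-tuple R -> R) : R := cvar predT (fun w => f (Xvec w)).

End Defs.

(** Write [g = f(X)] and [E[g | X_S]] for the conditional expectation given
    the coordinates in [S]. Then [EVar(S) = E[(g - E[g | X_S])^2]], and by
    Pythagoras [EVar(T) - EVar(T + j) = E[D_T^2]] with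
    [D_T = E[g | X_(T+j)] - E[g | X_T]]. For [T] a subset of [T'] not
    containing [j], independence of [X_j] from [X_T'] gives
    [E[E[g | X_T'] | X_(T+j)] = E[g | X_T]], hence [E[D_T' | X_(T+j)] = D_T],
    and conditional Jensen yields [E[D_T^2] <= E[D_T'^2]]. *)
From HB Require Import structures.
From mathcomp Require Import all_boot all_order all_algebra.
From mathcomp Require Import ring lra.
Import Order.TTheory GRing.Theory Num.Theory.
Set Implicit Arguments. Unset Strict Implicit. Unset Printing Implicit Defensive.
Local Open Scope ring_scope.

Section ConditionalExpectation.
Variables (R : realFieldType) (Omega : finType) (P : Omega -> R).
Hypothesis P_ge0 : forall w, 0 <= P w.

Definition expect (F : Omega -> R) : R := \sum_w P w * F w.

(* [condE k F w] is [E[F | k = k w]]; as a function of [w] it is [E[F | k]]. *)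
Definition condE (K : eqType) (k : Omega -> K) (F : Omega -> R) (w : Omega) : R :=
  cexp P (fun u => k u == k w) F.

Definition factors_through (K L : Type) (k : Omega -> K) (h : Omega -> L) : Prop :=
  forall u w, k u = k w -> h u = h w.

Lemma Prob_ge0 (A : pred Omega) : 0 <= Prob P A.
Proof. by apply: sumr_ge0 => w _. Qed.

Lemma Prob_neq0 (A : pred Omega) w : A w -> P w != 0 -> Prob P A != 0.
Proof.
move=> Aw Pw; rewrite gt_eqF // /Prob (bigD1 w) //=.
by rewrite ltr_wpDr ?sumr_ge0 // lt_def Pw P_ge0.
Qed.

Lemma Prob_eq0_P (A : pred Omega) w : Prob P A = 0 -> A w -> P w = 0.
Proof.
move=> PA0 Aw; have [//|Pw] := eqVneq (P w) 0.
by move: (Prob_neq0 Aw Pw); rewrite PA0 eqxx.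
Qed.

Lemma Prob_mul_cexp (A : pred Omega) F :
  Prob P A * cexp P A F = \sum_(u | A u) P u * F u.
Proof.
have [PA0|PAn0] := eqVneq (Prob P A) 0; last by rewrite mulrC divfK.
by rewrite PA0 mul0r big1 // => u Au; rewrite (Prob_eq0_P PA0 Au) mul0r.
Qed.

Lemma cexp_expect (A : pred Omega) F :
  cexp P A F = expect (fun u => (A u)%:R * F u) / expect (fun u => (A u)%:R).
Proof.
rewrite /cexp /Prob /expect; congr (_ / _); rewrite big_mkcond;
  by apply: eq_bigr => u _; case: (A u); rewrite ?mul1r ?mulr1 ?mul0r ?mulr0.
Qed.

Lemma eq_expect_ae F G : (forall u, P u != 0 -> F u = G u) -> expect F = expect G.
Proof.
move=> FG; apply: eq_bigr => u _.
by have [->|/FG->] := eqVneq (P u) 0; rewrite ?mul0r.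
Qed.

Lemma expectD F G : expect (fun u => F u + G u) = expect F + expect G.
Proof. by rewrite /expect -big_split; apply: eq_bigr => u _; rewrite mulrDr. Qed.

Lemma expectB F G : expect (fun u => F u - G u) = expect F - expect G.
Proof. by rewrite /expect -sumrB; apply: eq_bigr => u _; rewrite mulrBr. Qed.

Lemma expectZ c F : expect (fun u => c * F u) = c * expect F.
Proof. by rewrite /expect mulr_sumr; apply: eq_bigr => u _; rewrite mulrCA. Qed.

Lemma expect_ge0 F : (forall u, 0 <= F u) -> 0 <= expect F.
Proof. by move=> F_ge0; apply: sumr_ge0 => u _; rewrite mulr_ge0. Qed.

Lemma sum_over_values (K : eqType) (k : Omega -> K) (G : Omega -> R) :
  \sum_(v <- undup [seq k w | w <- enum Omega]) \sum_(u | k u == v) G u =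
  \sum_u G u.
Proof.
rewrite (exchange_big_dep predT) //=; apply: eq_bigr => u _.
rewrite (eq_bigl (pred1 (k u))) => [|v]; last by rewrite /= eq_sym.
rewrite -big_filter filter_pred1_uniq ?undup_uniq ?big_seq1 // mem_undup.
by apply: map_f; rewrite mem_enum.
Qed.

Lemma sum_values_Prob (K : eqType) (k : Omega -> K) (H : K -> R) :
  \sum_(v <- undup [seq k w | w <- enum Omega]) Prob P (fun w => k w == v) * H v =
  \sum_w P w * H (k w).
Proof.
rewrite -(sum_over_values k); apply: eq_bigr => v _.
by rewrite /Prob mulr_suml; apply: eq_bigr => u /eqP->.
Qed.

Lemma big_Prob_gt0 (V : Type) (s : seq V) (A : V -> pred Omega) (H : V -> R) :
  \sum_(v <- s | 0 < Prob P (A v)) Prob P (A v) * H v =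
  \sum_(v <- s) Prob P (A v) * H v.
Proof.
rewrite big_mkcond; apply: eq_bigr => v _.
case: ifP => // /negbT; rewrite -leNgt => PA_le0.
suff -> : Prob P (A v) = 0 by rewrite mul0r.
by apply/eqP; rewrite eq_le PA_le0 Prob_ge0.
Qed.

Lemma condEB (K : eqType) (k : Omega -> K) F G w :
  condE k (fun u => F u - G u) w = condE k F w - condE k G w.
Proof.
rewrite /condE /cexp -mulrBl -sumrB; congr (_ * _).
by apply: eq_bigr => u _; rewrite mulrBr.
Qed.

Lemma condE_factors (K : eqType) (k : Omega -> K) F : factors_through k (condE k F).
Proof. by move=> u w kuw; rewrite /condE kuw. Qed.

Lemma condE_mull (K : eqType) (k : Omega -> K) h F w : factors_through k h ->
  condE k (fun u => h u * F u) w = h w * condE k F w.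
Proof.
move=> hk; rewrite /condE /cexp [RHS]mulrA mulr_sumr; congr (_ * _).
by apply: eq_bigr => u /eqP kuw; rewrite (hk _ _ kuw) mulrCA.
Qed.

Lemma condE_id (K : eqType) (k : Omega -> K) h w :
  factors_through k h -> P w != 0 -> condE k h w = h w.
Proof.
move=> hk Pw; rewrite /condE /cexp (eq_bigr (fun u => h w * P u)) => [|u /eqP kuw].
  by rewrite -mulr_sumr mulfK // (@Prob_neq0 (fun u => k u == k w) w).
by rewrite (hk _ _ kuw) mulrC.
Qed.

Lemma expect_condE (K : eqType) (k : Omega -> K) F : expect (condE k F) = expect F.
Proof.
rewrite /expect /condE -(sum_values_Prob k (fun v => cexp P (fun u => k u == v) F)).
under eq_bigr do rewrite Prob_mul_cexp.
exact: (sum_over_values k (fun u => P u * F u)).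
Qed.

Lemma condE_condE (K1 K2 : eqType) (k1 : Omega -> K1) (k2 : Omega -> K2) F w :
  factors_through k1 k2 -> condE k2 (condE k1 F) w = condE k2 F w.
Proof.
move=> k12; rewrite /condE !cexp_expect; congr (_ / _).
rewrite -[RHS](expect_condE k1); apply: eq_bigr => u _; rewrite condE_mull //.
by move=> a b /k12->.
Qed.

Lemma expect_sqr_condE (K : eqType) (k : Omega -> K) G :
  expect (fun u => G u ^+ 2) =
  expect (fun u => (G u - condE k G u) ^+ 2) + expect (fun u => condE k G u ^+ 2).
Proof.
have cross : expect (fun u => condE k G u * G u) = expect (fun u => condE k G u ^+ 2).
  rewrite -(expect_condE k); apply: eq_bigr => u _.
  by rewrite condE_mull //; apply: condE_factors.
transitivity (expect (fun u => ((G u - condE k G u) ^+ 2 + condE k G u ^+ 2) +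
                2 * (condE k G u * G u - condE k G u ^+ 2))).
  by apply: eq_bigr => u _; congr (_ * _); ring.
by rewrite expectD expectZ expectB cross subrr mulr0 addr0 expectD.
Qed.

Lemma expect_sqr_condE_le (K : eqType) (k : Omega -> K) G :
  expect (fun u => condE k G u ^+ 2) <= expect (fun u => G u ^+ 2).
Proof.
by rewrite [leRHS](expect_sqr_condE k) lerDr expect_ge0 // => u; rewrite sqr_ge0.
Qed.

Lemma expect_sqr_dev_finer (K1 K2 : eqType) (k1 : Omega -> K1) (k2 : Omega -> K2) g :
  factors_through k1 k2 ->
  expect (fun u => (g u - condE k2 g u) ^+ 2) =
  expect (fun u => (g u - condE k1 g u) ^+ 2) +
  expect (fun u => (condE k1 g u - condE k2 g u) ^+ 2).
Proof.
move=> k12.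
have k1_g2 : factors_through k1 (condE k2 g) by move=> a b /k12; apply: condE_factors.
have dev u : P u != 0 ->
    condE k1 (fun x => g x - condE k2 g x) u = condE k1 g u - condE k2 g u.
  by move=> Pu; rewrite condEB (condE_id k1_g2 Pu).
rewrite (expect_sqr_condE k1 (fun x => g x - condE k2 g x)); congr (_ + _).
  by apply: eq_expect_ae => u Pu; rewrite dev //; congr (_ ^+ 2); ring.
by apply: eq_expect_ae => u Pu; rewrite dev.
Qed.

Lemma cvar_condE (K : eqType) (k : Omega -> K) g w :
  cvar P (fun u => k u == k w) g = condE k (fun u => (g u - condE k g u) ^+ 2) w.
Proof. by rewrite /cvar /condE /cexp; congr (_ * _); apply: eq_bigr => u /eqP->. Qed.

End ConditionalExpectation.

Lemma forall_in_setU1 (I : finType) (p : pred I) (j : I) (S : {set I}) :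
  [forall i in j |: S, p i] = p j && [forall i in S, p i].
Proof.
apply/forallP/andP => [H|[pj /forallP H] i].
  split; first by have := H j; rewrite setU11.
  apply/forallP => i; apply/implyP => iS.
  by apply: (implyP (H i)); rewrite in_setU1 iS orbT.
by apply/implyP; rewrite in_setU1 => /orP[/eqP->|iS] //; apply: (implyP (H i)).
Qed.

Section CoordinateConditioning.
Variables (R : realFieldType) (Omega : finType) (P : Omega -> R).
Hypothesis P_ge0 : forall w, 0 <= P w.
Variables (n : nat) (X : 'I_n -> Omega -> R).

Lemma eq_XT (S : {set 'I_n}) u w :
  (XT X S u == XT X S w) = [forall i in S, X i u == X i w].
Proof.
apply/eqP/forallP => [XTuw i|H].
  apply/implyP => iS; have := congr1 (fun t => tnth t i) XTuw.
  by rewrite !tnth_mktuple iS => ->.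
apply: eq_from_tnth => i; rewrite !tnth_mktuple; case: ifP => // iS.
exact/eqP/(implyP (H i) iS).
Qed.

Lemma XT_factors (A B : {set 'I_n}) :
  B \subset A -> factors_through (XT X A) (XT X B).
Proof.
move=> sBA u w /eqP; rewrite eq_XT => /forallP H; apply/eqP; rewrite eq_XT.
by apply/forallP => i; apply/implyP => iB; apply: (implyP (H i)); apply: (subsetP sBA).
Qed.

Lemma eq_XT_setU1 j S u w :
  (XT X (j |: S) u == XT X (j |: S) w) = (XT X S u == XT X S w) && (X j u == X j w).
Proof. by rewrite !eq_XT forall_in_setU1 andbC. Qed.

Definition f_of_X (f : n.-tuple R -> R) (w : Omega) : R := f (Xvec X w).

Lemma EVar_expect f S :
  EVar P X f S = expect P (fun w =>
    (f_of_X f w - condE P (XT X S) (f_of_X f) w) ^+ 2).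
Proof.
rewrite /EVar big_Prob_gt0 // (sum_values_Prob P (XT X S)
  (fun v => cvar P (fun w => XT X S w == v) (f_of_X f))).
rewrite -[RHS](expect_condE P_ge0 (XT X S)).
by apply: eq_bigr => w _; rewrite cvar_condE.
Qed.

Lemma EVar_sub_setU1 f (T : {set 'I_n}) j :
  EVar P X f T - EVar P X f (j |: T) = expect P (fun u =>
    (condE P (XT X (j |: T)) (f_of_X f) u - condE P (XT X T) (f_of_X f) u) ^+ 2).
Proof.
rewrite !EVar_expect (expect_sqr_dev_finer P_ge0 _ (XT_factors (subsetUr [set j] T))).
by rewrite addrAC subrr add0r.
Qed.

Hypothesis indep : mutually_independent P X.

Lemma Prob_XT_indep (T' : {set 'I_n}) j b w : j \notin T' ->
  Prob P (fun u => (XT X T' u == XT X T' w) && (X j u == b)) =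
  Prob P (fun u => XT X T' u == XT X T' w) * Prob P (fun u => X j u == b).
Proof.
move=> jT'; pose v i := if i == j then b else X i w.
have XT'v u : (XT X T' u == XT X T' w) = [forall i in T', X i u == v i].
  rewrite eq_XT; apply: eq_forallb_in => i iT'; rewrite /v.
  by have [eij|//] := eqVneq i j; rewrite -eij iT' in jT'.
transitivity (Prob P (fun u => [forall i in j |: T', X i u == v i])).
  by apply: eq_bigl => u; rewrite forall_in_setU1 XT'v /v eqxx andbC.
rewrite indep big_setU1 //= -indep mulrC; congr (_ * _).
  by apply: eq_bigl => u; rewrite XT'v.
by rewrite /v eqxx.
Qed.

Lemma condE_indicator_indep (T' : {set 'I_n}) j b w : j \notin T' -> P w != 0 ->
  condE P (XT X T') (fun u => (X j u == b)%:R) w = Prob P (fun u => X j u == b).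
Proof.
move=> jT' Pw; rewrite /condE /cexp.
have -> : \sum_(u | XT X T' u == XT X T' w) P u * (X j u == b)%:R =
          Prob P (fun u => (XT X T' u == XT X T' w) && (X j u == b)).
  rewrite /Prob big_mkcondr; apply: eq_bigr => u _.
  by case: (X j u == b); rewrite ?mulr1 ?mulr0.
rewrite Prob_XT_indep // mulrAC divff ?mul1r //.
exact: (@Prob_neq0 _ _ _ P_ge0 (fun u => XT X T' u == XT X T' w) w).
Qed.

Lemma expect_mul_indicator_indep (T' : {set 'I_n}) j b h : j \notin T' ->
  factors_through (XT X T') h ->
  expect P (fun u => h u * (X j u == b)%:R) = expect P h * Prob P (fun u => X j u == b).
Proof.
move=> jT' hT'; rewrite -(expect_condE P_ge0 (XT X T')) /expect mulr_suml.
apply: eq_bigr => u _; have [->|Pu] := eqVneq (P u) 0; first by rewrite !mul0r.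
by rewrite condE_mull // condE_indicator_indep // mulrA.
Qed.

Lemma condE_setU1_indep (T T' : {set 'I_n}) j h w : T \subset T' -> j \notin T' ->
  factors_through (XT X T') h -> P w != 0 ->
  condE P (XT X (j |: T)) h w = condE P (XT X T) h w.
Proof.
move=> sTT' jT' hT' Pw; rewrite /condE !cexp_expect.
pose IT u : R := (XT X T u == XT X T w)%:R.
pose Ij u : R := (X j u == X j w)%:R.
have IjT u : (XT X (j |: T) u == XT X (j |: T) w)%:R = IT u * Ij u :> R.
  by rewrite eq_XT_setU1 -mulnb natrM.
have IT_T' : factors_through (XT X T') IT.
  by move=> a c /(XT_factors sTT') acT; rewrite /IT acT.
have ITh_T' : factors_through (XT X T') (fun u => IT u * h u).
  by move=> a c acT'; rewrite (IT_T' _ _ acT') (hT' _ _ acT').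
have -> : expect P (fun u => (XT X (j |: T) u == XT X (j |: T) w)%:R * h u) =
          expect P (fun u => (IT u * h u) * Ij u).
  by apply: eq_bigr => u _; rewrite IjT mulrAC.
have -> : expect P (fun u => (XT X (j |: T) u == XT X (j |: T) w)%:R) =
          expect P (fun u => IT u * Ij u).
  by apply: eq_bigr => u _; rewrite IjT.
rewrite /Ij !(expect_mul_indicator_indep (T' := T')) // invfM mulrACA divff ?mulr1 //.
exact: (@Prob_neq0 _ _ _ P_ge0 (fun u => X j u == X j w) w).
Qed.

Lemma condE_increment_le g (T T' : {set 'I_n}) j : T \subset T' -> j \notin T' ->
  expect P (fun u => (condE P (XT X (j |: T)) g u - condE P (XT X T) g u) ^+ 2) <=
  expect P (fun u => (condE P (XT X (j |: T')) g u - condE P (XT X T') g u) ^+ 2).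
Proof.
move=> sTT' jT'.
set D := fun u => condE P (XT X (j |: T')) g u - condE P (XT X T') g u.
have DjT u : P u != 0 ->
    condE P (XT X (j |: T)) D u = condE P (XT X (j |: T)) g u - condE P (XT X T) g u.
  move=> Pu; rewrite condEB (condE_condE P_ge0 _ _ (XT_factors (setUS [set j] sTT'))).
  rewrite (condE_setU1_indep sTT' jT' (condE_factors P (k := XT X T') g) Pu).
  by rewrite (condE_condE P_ge0 _ _ (XT_factors sTT')).
rewrite -(eq_expect_ae (F := fun u => condE P (XT X (j |: T)) D u ^+ 2)); last first.
  by move=> u Pu; rewrite DjT.
exact: expect_sqr_condE_le.
Qed.

End CoordinateConditioning.

Theorem mainTheorem3 (R : realFieldType) (Omega : finType) (P : Omega -> R)
  (P_ge0 : forall w, 0 <= P w) (P_sum1 : \sum_w P w = 1)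
  (n : nat) (X : 'I_n -> Omega -> R)
  (indep : mutually_independent P X)
  (f : n.-tuple R -> R) (T T' : {set 'I_n}) (j : 'I_n) :
  T \subset T' -> j \notin T' ->
  EVar P X f (j |: T) - EVar P X f T >= EVar P X f (j |: T') - EVar P X f T'.
Proof.
move=> sTT' jT'.
have := condE_increment_le P_ge0 indep (f_of_X X f) sTT' jT'.
by rewrite -!(EVar_sub_setU1 P_ge0); lra.
Qed.
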